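(* Let $p$ be prime, $\mathbb{F}=\mathbb{F}_p$, $1\le k\le n\le N$, $y_1,\dots,y_k\in\mathbb{F}^N$, $0\le m\le n-k$ and $1\le j_1<\dots<j_m\le N$. Let $a$ be the coefficient of the monomial $x_{j_1}\cdots x_{j_m}$ in the (multilinear) polynomial $(S_n)_{y_1\dots y_k}(x)$, where $S_n(x)=\sum_{T\subseteq[N],|T|=n}\prod_{i\in T}x_i$. Then, with $T=\{j_1,\dots,j_m\}$: (1) $a=\sum_{\ell_1,\dots,\ell_k\ge1,\ \sum_i\ell_i=n-m}\mathcal{H}^{T}\big(y_1^{(\ell_1)},\dots,y_k^{(\ell_k)}\big)$; (2) if $k+m+p>n+1$, then $a=\sum_{\ell_1,\dots,\ell_k\ge1,\ \sum_i\ell_i=n-m}\Big(\prod_{i=1}^k\ell_i!\Big)^{-1}\mathcal{S}^{T}\big(y_1^{(\ell_1)},\dots,y_k^{(\ell_k)}\big)$, the inverse taken in $\mathbb{F}_p$.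
   Context: Directional derivatives: $f_y(x)=f(x+y)-f(x)$, iterated. For vectors $r_1,\dots,r_k\in\mathbb{F}^N$, integers $\ell_t\ge0$ with $\sum\ell_t=L$, and $T\subseteq[N]$, let $[N]\setminus T=\{c_1<c_2<\dots\}$ and define $\mathcal{H}^T(r_1^{(\ell_1)},\dots,r_k^{(\ell_k)})=\sum_{j_1<\dots<j_L,\ j_i\in[N]\setminus T}\sum_{(\theta_1,\dots,\theta_k)}\prod_t\prod_{i\in\theta_t}r_t(j_i)$, where $(\theta_t)$ ranges over ordered partitions of $[L]$ with $|\theta_t|=\ell_t$; and $\mathcal{S}^T(r_1^{(\ell_1)},\dots,r_k^{(\ell_k)})=\sum_{\rho}\prod_{i=1}^L w_i(\rho(i))$, where $\rho$ ranges over injective maps $[L]\to[N]\setminus T$ and $(w_1,\dots,w_L)$ is the list consisting of $r_1$ repeated $\ell_1$ times, then $r_2$ repeated $\ell_2$ times, etc. ($\mathcal{S}^T$ is the sum of all permanents of $L\times L$ submatrices of the matrix with rows $w_i$ restricted to columns outside $T$.) Here $r(j)$ is the $j$-th coordinate. *)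

From HB Require Import structures.
From mathcomp Require Import all_boot all_order all_algebra.
From mathcomp Require Import mpoly.
Set Implicit Arguments. Unset Strict Implicit. Unset Printing Implicit Defensive.
Import Order.TTheory GRing.Theory.
Local Open Scope ring_scope.

(* Coordinates are 0-indexed: [N] is 'I_N. *)

Section Defs.
Variable F : comNzRingType.
Variable N : nat.

Definition S_sym (n : nat) : {mpoly F[N]} :=
  \sum_(T : {set 'I_N} | #|T| == n) \prod_(i in T) 'X_i.

Definition dderiv (y : 'I_N -> F) (f : {mpoly F[N]}) : {mpoly F[N]} :=
  f \mPo [tuple ('X_i + (y i)%:MP_[N]) | i < N] - f.

Definition iter_dderiv (k : nat) (y : 'I_k -> 'I_N -> F) (f : {mpoly F[N]})
  : {mpoly F[N]} :=
  foldl (fun g t => dderiv (y t) g) f (enum 'I_k).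

Definition mono_of_set (T : {set 'I_N}) : 'X_{1..N} :=
  [multinom ((i \in T) : nat) | i < N].

(* The inner sum over ordered partitions (theta_1,..,theta_k) of [L] with
   |theta_t| = l_t is encoded by the function th : [L] -> [k], i -> the t with
   i in theta_t (a bijection between such partitions and functions with fibre
   sizes l_t). *)
Definition Hsum (T : {set 'I_N}) (k : nat) (r : 'I_k -> 'I_N -> F)
  (l : 'I_k -> nat) : F :=
  let L := (\sum_(t < k) l t)%N in
  \sum_(j : {ffun 'I_L -> 'I_N} |
          [forall i, j i \notin T] &&
          [forall i : 'I_L, forall i' : 'I_L, (i < i')%N ==> (j i < j i')%N])
    \sum_(th : {ffun 'I_L -> 'I_k} |
            [forall t, #|[set i | th i == t]| == l t])
      \prod_(t < k) \prod_(i | th i == t) r t (j i).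

Definition wlist (k : nat) (r : 'I_k -> 'I_N -> F) (l : 'I_k -> nat)
  : seq ('I_N -> F) :=
  flatten [seq nseq (l t) (r t) | t <- enum 'I_k].

Definition Ssum (T : {set 'I_N}) (k : nat) (r : 'I_k -> 'I_N -> F)
  (l : 'I_k -> nat) : F :=
  let L := (\sum_(t < k) l t)%N in
  \sum_(rho : {ffun 'I_L -> 'I_N} |
          injectiveb rho && [forall i, rho i \notin T])
    \prod_(i < L) (nth (fun _ => 0) (wlist r l) i) (rho i).

End Defs.

From HB Require Import structures.
From mathcomp Require Import all_boot all_order all_algebra.
From mathcomp Require Import mpoly zify.
Import Order.TTheory GRing.Theory.
Local Open Scope ring_scope.

(* Shifting x by y_t turns each variable factor x_u of a monomial of S_n into
   x_u + y_t(u), and the difference f_{y_t} keeps exactly the expanded terms in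
   which some factor took the value y_t(u).  Hence (S_n)_{y_1...y_k} is the sum,
   over all n-sets whose points are labelled either "variable" or by a direction
   t, every direction used at least once, of the corresponding products.  The
   coefficient of x_T collects the labellings whose variable points are exactly
   T, i.e. the colourings of n - m points of [N] \ T by [k] using every colour;
   grouping them by their fibre sizes l gives sums C^T(l) of colourings.
   A colouring with fibre sizes l is the same as an increasing enumeration j of
   its support together with the colour th of each position, so C^T(l) = H^T(l),
   which is (1).  It also arises from exactly prod_t l_t! injections rho in the
   definition of S^T (permute the positions within each block), so
   S^T(l) = (prod_t l_t!) C^T(l); in characteristic p these factorials are units
   because l_t <= n - m - (k - 1) < p, which is (2). *)

Set Implicit Arguments. Unset Strict Implicit. Unset Printing Implicit Defensive.
Section Colourings.
Variables (R : comNzRingType) (N k : nat) (y : 'I_k -> 'I_N -> R).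

Definition cweight (c : {ffun 'I_N -> option 'I_k}) : R :=
  \prod_u (if c u is Some t then y t u else 1).

Definition colouring_with (T : {set 'I_N}) (l : 'I_k -> nat)
    (c : {ffun 'I_N -> option 'I_k}) : bool :=
  [forall u, (u \in T) ==> (c u == None)] &&
  [forall t, #|[set u | c u == Some t]| == l t].

Definition Csum (T : {set 'I_N}) (l : 'I_k -> nat) : R :=
  \sum_(c | colouring_with T l c) cweight c.

Lemma eq_Csum T l1 l2 : l1 =1 l2 -> Csum T l1 = Csum T l2.
Proof.
move=> el; apply: eq_bigl => c; congr (_ && _).
by apply: eq_forallb => t; rewrite el.
Qed.

Lemma Csum_nil T : Csum T (fun _ => 0%N) = 1.
Proof.
rewrite /Csum (big_pred1 [ffun=> None]); last first.
  move=> c /=; apply/andP/eqP => [[_ /forallP c0]|->].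
    apply/ffunP => u; rewrite ffunE; case cu: (c u) => [t|] //.
    by have := c0 t; rewrite cards_eq0 => /eqP/setP/(_ u); rewrite !inE cu eqxx.
  split; apply/forallP => x; rewrite ?ffunE ?implybT //.
  by rewrite cards_eq0; apply/eqP/setP => u; rewrite !inE ffunE.
by rewrite /cweight big1 // => u _; rewrite ffunE.
Qed.

Definition recolour (u : 'I_N) (v : option 'I_k) (c : {ffun 'I_N -> option 'I_k}) :
    {ffun 'I_N -> option 'I_k} :=
  [ffun x => if x == u then v else c x].

Lemma card_recolour_fibre u (t t' : 'I_k) (c : {ffun 'I_N -> option 'I_k}) :
  c u = None ->
  #|[set x | recolour u (Some t) c x == Some t']| =
  (#|[set x | c x == Some t']| + (t' == t))%N.
Proof.
move=> cu; have [<-|ne] := eqVneq t' t.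
  have -> : [set x | recolour u (Some t') c x == Some t'] = u |: [set x | c x == Some t'].
    by apply/setP=> x; rewrite !inE ffunE; case: (x =P u) => [->|_] //=; rewrite eqxx.
  by rewrite cardsU1 inE cu addn1.
rewrite addn0; apply: eq_card => x; rewrite !inE ffunE.
by case: (x =P u) => [->|_] //; rewrite cu; case: eqP => // -[] e; rewrite e eqxx in ne.
Qed.

Section AddPoint.
Variables (T : {set 'I_N}) (l : 'I_k -> nat) (t : 'I_k).
Let l' t' := (l t' + (t' == t))%N.

Lemma Csum_setU1 u : u \notin T ->
  y t u * Csum (u |: T) l = \sum_(c | colouring_with T l' c && (c u == Some t)) cweight c.
Proof.
move=> uT; rewrite /Csum big_distrr /=; apply: esym.
rewrite (reindex_onto (recolour u (Some t)) (recolour u None)) /=; last first.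
  move=> c /andP[_ /eqP cu]; apply/ffunP => x; rewrite !ffunE.
  by case: (x =P u) => [->|]; rewrite ?cu.
apply: eq_big => c; last first.
  move=> /andP[_ /eqP e]; have cu : c u = None by rewrite -e ffunE eqxx.
  rewrite /cweight (bigD1 u) //= [X in _ = _ * X](bigD1 u) //= ffunE eqxx cu mul1r.
  by congr (_ * _); apply: eq_bigr => x xu; rewrite ffunE (negbTE xu).
rewrite ffunE eqxx /= eqxx andbT.
have -> : (recolour u None (recolour u (Some t) c) == c) = (c u == None).
  apply/eqP/eqP => [<-|cu]; first by rewrite ffunE eqxx.
  by apply/ffunP => x; rewrite !ffunE; case: (x =P u) => [->|].
have [cu|cu] := eqVneq (c u) None; last first.
  rewrite andbF; apply/esym/negbTE; apply/negP => /andP[/forallP/(_ u)].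
  by rewrite setU11 /= (negbTE cu).
rewrite andbT; congr (_ && _); last first.
  by apply: eq_forallb => t'; rewrite card_recolour_fibre // eqn_add2r.
apply/forallP/forallP => cT x; apply/implyP => xT.
  move: xT; rewrite !inE => /orP[/eqP->|xT]; first by rewrite cu.
  have xu : x != u by apply: contraNneq uT => <-.
  by have := cT x; rewrite xT /= ffunE (negbTE xu).
rewrite ffunE; case: (x =P u) => [xu|_]; first by move: xT; rewrite xu (negbTE uT).
by have := cT x; rewrite inE xT orbT.
Qed.

(* A colouring with fibre sizes [l'] arises from each of its [l' t] points of
   colour [t] by colouring that point. *)
Lemma Csum_add_point :
  \sum_(u | u \notin T) y t u * Csum (u |: T) l = (l t).+1%:R * Csum T l'.
Proof.
rewrite (eq_bigr _ Csum_setU1).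
rewrite (exchange_big_dep (colouring_with T l')) /=; last by move=> u c _ /andP[].
rewrite /Csum big_distrr /=; apply: eq_bigr => c cl'.
have /andP[/forallP cT /forallP cl] := cl'.
rewrite (eq_bigl (fun u => u \in [set u | c u == Some t])); last first.
  move=> u; rewrite inE cl' /= andbC; case: eqP => //= cu.
  by apply/negP => uT; have := cT u; rewrite uT cu.
by rewrite sumr_const (eqP (cl t)) /l' eqxx addn1 mulr_natl.
Qed.

End AddPoint.

Definition Sinj (T : {set 'I_N}) (L : nat) (w : seq ('I_N -> R)) : R :=
  \sum_(rho : {ffun 'I_L -> 'I_N} | injectiveb rho && [forall i, rho i \notin T])
    \prod_(i < L) nth (fun _ => 0) w i (rho i).

Definition ffun_cons L (u : 'I_N) (rho : {ffun 'I_L -> 'I_N}) : {ffun 'I_L.+1 -> 'I_N} :=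
  [ffun i => if unlift ord0 i is Some i' then rho i' else u].

Definition ffun_behead L (rho : {ffun 'I_L.+1 -> 'I_N}) : {ffun 'I_L -> 'I_N} :=
  [ffun i => rho (lift ord0 i)].

Lemma ffun_cons0 L u (rho : {ffun 'I_L -> 'I_N}) : ffun_cons u rho ord0 = u.
Proof. by rewrite ffunE unlift_none. Qed.

Lemma ffun_consS L u (rho : {ffun 'I_L -> 'I_N}) i : ffun_cons u rho (lift ord0 i) = rho i.
Proof. by rewrite ffunE liftK. Qed.

Lemma injectiveb_ffun_cons L u (rho : {ffun 'I_L -> 'I_N}) :
  injectiveb (ffun_cons u rho) = injectiveb rho && [forall i, rho i != u].
Proof.
apply/injectiveP/andP => [inj_cons|[/injectiveP inj_rho /forallP rho_u]].
  split.
    apply/injectiveP => i i' e; apply: (@lift_inj _ ord0).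
    by apply: inj_cons; rewrite !ffun_consS.
  apply/forallP => i; apply/eqP => e.
  have := inj_cons (lift ord0 i) ord0; rewrite ffun_consS ffun_cons0 => /(_ e) /eqP.
  by rewrite eq_sym (negbTE (neq_lift ord0 i)).
move=> i i'; case: (unliftP ord0 i) => [j|] ->; case: (unliftP ord0 i') => [j'|] -> //;
  rewrite ?ffun_consS ?ffun_cons0 => e.
- by rewrite (inj_rho _ _ e).
- by have := rho_u j; rewrite e eqxx.
- by have := rho_u j'; rewrite e eqxx.
Qed.

Lemma Sinj_cons T L w s :
  Sinj T L.+1 (w :: s) = \sum_(u | u \notin T) w u * Sinj (u |: T) L s.
Proof.
rewrite /Sinj (partition_big (fun rho : {ffun 'I_L.+1 -> 'I_N} => rho ord0)
  (fun u => u \notin T)) /=; last by move=> rho /andP[_ /forallP]; apply.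
apply: eq_bigr => u uT; rewrite big_distrr /=.
rewrite (reindex_onto (ffun_cons u) (@ffun_behead L)) /=; last first.
  move=> rho /andP[_ /eqP r0]; apply/ffunP => i; rewrite ffunE.
  by case: (unliftP ord0 i) => [i'|] ->; rewrite ?ffunE ?r0.
apply: eq_big => rho; last first.
  move=> _; rewrite big_ord_recl ffun_cons0 /=; congr (_ * _).
  by apply: eq_bigr => i _; rewrite ffun_consS.
have -> : ffun_behead (ffun_cons u rho) == rho.
  by apply/eqP/ffunP => i; rewrite ffunE ffun_consS.
rewrite ffun_cons0 eqxx !andbT injectiveb_ffun_cons -andbA; congr (_ && _).
apply/andP/forallP => [[/forallP rho_u /forallP avoidT] i|avoid_uT].
  by rewrite !inE negb_or rho_u /=; have := avoidT (lift ord0 i); rewrite ffun_consS.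
split; apply/forallP => i.
  by have := avoid_uT i; rewrite !inE negb_or => /andP[].
case: (unliftP ord0 i) => [i'|] ->; rewrite ?ffun_consS ?ffun_cons0 //.
by have := avoid_uT i'; rewrite !inE negb_or => /andP[].
Qed.

Lemma Sinj_Csum (s : seq 'I_k) T :
  Sinj T (size s) (map y s) =
  (\prod_(t < k) (count_mem t s)`!)%:R * Csum T (fun t => count_mem t s).
Proof.
elim: s T => [|t s IHs] T.
  rewrite big1 // mul1r Csum_nil /Sinj (eq_bigl predT); last first.
    move=> rho; apply/andP; split; first by apply/injectiveP => -[].
    by apply/forallP => -[].
  rewrite (eq_bigr (fun _ => 1)); last by move=> rho _; rewrite big_ord0.
  by rewrite sumr_const card_ffun !card_ord.
rewrite [size _]/= Sinj_cons.
under eq_bigr => u _ do rewrite IHs mulrCA.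
rewrite -big_distrr /= Csum_add_point mulrA -natrM; congr (_%:R * _).
  rewrite (bigD1 t) //= [X in _ = X](bigD1 t) //= eqxx add1n factS mulnC mulnA.
  by congr (_ * _)%N; apply: eq_bigr => t' nt; rewrite eq_sym (negbTE nt).
by apply: eq_Csum => t' /=; rewrite addnC eq_sym.
Qed.

Definition colour_seq (l : 'I_k -> nat) : seq 'I_k :=
  flatten [seq nseq (l t) t | t <- enum 'I_k].

Lemma count_colour_seq l t : count_mem t (colour_seq l) = l t.
Proof.
rewrite /colour_seq count_flatten -map_comp sumnE big_map big_enum /=.
rewrite (bigD1 t) //= count_nseq /= eqxx mul1n big1 ?addn0 // => t' nt.
by rewrite /= count_nseq /= (negbTE nt).
Qed.

Lemma size_colour_seq l : size (colour_seq l) = (\sum_(t < k) l t)%N.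
Proof.
rewrite /colour_seq size_flatten /shape -map_comp sumnE big_map big_enum /=.
by apply: eq_bigr => t _; rewrite /= size_nseq.
Qed.

Lemma wlist_colour_seq l : wlist y l = map y (colour_seq l).
Proof.
rewrite /wlist /colour_seq map_flatten -map_comp; congr flatten.
by apply: eq_map => t /=; rewrite map_nseq.
Qed.

Lemma Ssum_Csum T l : Ssum T y l = (\prod_(t < k) (l t)`!)%:R * Csum T l.
Proof.
have -> : Ssum T y l = Sinj T (size (colour_seq l)) (map y (colour_seq l)).
  by rewrite /Ssum /= wlist_colour_seq -size_colour_seq.
rewrite Sinj_Csum; congr (_%:R * _); last exact/eq_Csum/count_colour_seq.
by apply: eq_bigr => t _; rewrite count_colour_seq.
Qed.

End Colourings.

Lemma sorted_ltn_enum_ord n : sorted (relpre val ltn) (enum 'I_n).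
Proof. by rewrite -sorted_map val_enum_ord iota_ltn_sorted. Qed.

Section IncreasingMaps.
Variables (N L : nat).
Implicit Types j : {ffun 'I_L -> 'I_N}.

Definition increasing j : bool :=
  [forall i : 'I_L, forall i' : 'I_L, (i < i')%N ==> (j i < j i')%N].

Lemma ltn_homo_inj (f : 'I_L -> 'I_N) :
  (forall i i' : 'I_L, (i < i')%N -> (f i < f i')%N) -> injective f.
Proof.
move=> f_incr i i' e; apply: val_inj.
by have [/f_incr|/f_incr|//] := ltngtP i i'; rewrite e ltnn.
Qed.

Lemma increasing_inj j : increasing j -> injective j.
Proof.
move=> /forallP j_incr; apply: ltn_homo_inj => i i' lt.
by have := forallP (j_incr i) i'; rewrite lt.
Qed.

Lemma sorted_increasing j : increasing j ->
  sorted (relpre val ltn) [seq j i | i <- enum 'I_L].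
Proof.
move=> /forallP j_incr; rewrite sorted_map.
apply: sub_sorted (sorted_ltn_enum_ord L) => i i' /= lt.
by have := forallP (j_incr i) i'; rewrite lt.
Qed.

Lemma increasing_eq j1 j2 : increasing j1 -> increasing j2 ->
  [set j1 i | i : 'I_L] = [set j2 i | i : 'I_L] -> j1 = j2.
Proof.
move=> incr1 incr2 e.
have mem_map_enum j x : (x \in [seq j i | i <- enum 'I_L]) = (x \in [set j i | i : 'I_L]).
  by apply/mapP/imsetP => -[i _ ->]; exists i; rewrite ?mem_enum.
have : [seq j1 i | i <- enum 'I_L] = [seq j2 i | i <- enum 'I_L].
  apply: (@irr_sorted_eq _ (relpre val ltn)) => [y x z|x|||x].
  - exact: ltn_trans.
  - exact: ltnn.
  - exact: sorted_increasing.
  - exact: sorted_increasing.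
  by rewrite !mem_map_enum e.
by move=> /eq_in_map e12; apply/ffunP => i; apply: e12; rewrite mem_enum.
Qed.

Lemma increasing_enum (S : {set 'I_N}) (x0 : 'I_N) : #|S| = L ->
  exists2 j, increasing j & [set j i | i : 'I_L] = S.
Proof.
move=> cS; set e := enum S.
have size_e : size e = L by rewrite -cS cardE.
have lt_trans : transitive (relpre (@nat_of_ord N) ltn).
  by move=> ? ? ?; apply: ltn_trans.
have sorted_e : sorted (relpre val ltn) e.
  rewrite /e /enum_mem -fintype.enumT.
  exact/(sorted_filter lt_trans)/sorted_ltn_enum_ord.
exists [ffun i : 'I_L => nth x0 e i].
  apply/forallP => i; apply/forallP => i'; apply/implyP => lt; rewrite !ffunE.
  by apply: (sorted_ltn_nth lt_trans); rewrite ?inE ?size_e.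
apply/setP => x; apply/imsetP/idP => [[i _ ->]|xS].
  by rewrite ffunE -(mem_enum (mem S)) mem_nth // size_e.
have ie : (index x e < L)%N by rewrite -size_e index_mem mem_enum.
by exists (Ordinal ie) => //; rewrite ffunE /= nth_index // mem_enum.
Qed.

End IncreasingMaps.

Section HsumCsum.
Variables (R : comNzRingType) (N k : nat) (y : 'I_k -> 'I_N -> R).
Implicit Types (T : {set 'I_N}) (l : 'I_k -> nat) (c : {ffun 'I_N -> option 'I_k}).

Definition csupport c : {set 'I_N} := [set u | c u != None].

Lemma card_csupport (t0 : 'I_k) c :
  #|csupport c| = (\sum_(t < k) #|[set u | c u == Some t]|)%N.
Proof.
rewrite -sum1_card (partition_big (fun u => odflt t0 (c u)) predT) //=.
apply: eq_bigr => t _; rewrite -sum1_card; apply: eq_bigl => u.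
by rewrite !inE; case: (c u).
Qed.

Section Along.
Variables (L : nat) (j : {ffun 'I_L -> 'I_N}).

Definition colouring_along (th : {ffun 'I_L -> 'I_k}) : {ffun 'I_N -> option 'I_k} :=
  [ffun u => if [pick i | j i == u] is Some i then Some (th i) else None].

Lemma colouring_along_on th i : injective j -> colouring_along th (j i) = Some (th i).
Proof.
move=> j_inj; rewrite ffunE; case: pickP => [i' /eqP /j_inj -> //|/(_ i)].
by rewrite eqxx.
Qed.

Lemma colouring_along_off th u : u \notin [set j i | i : 'I_L] -> colouring_along th u = None.
Proof.
move=> uj; rewrite ffunE; case: pickP => // i /eqP ji.
by case/negP: uj; apply/imsetP; exists i.
Qed.

Lemma csupport_along th : injective j -> csupport (colouring_along th) = [set j i | i : 'I_L].
Proof.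
move=> j_inj; apply/setP => u; rewrite inE.
have [/imsetP[i _ ->]|uj] := boolP (u \in [set j i | i : 'I_L]).
  by rewrite colouring_along_on.
by rewrite colouring_along_off.
Qed.

Lemma sum_colourings_on_image T l (t0 : 'I_k) :
  increasing j -> [forall i, j i \notin T] ->
  \sum_(c | colouring_with T l c && ([set j i | i : 'I_L] == csupport c)) cweight y c =
  \sum_(th : {ffun 'I_L -> 'I_k} | [forall t, #|[set i | th i == t]| == l t])
    \prod_(t < k) \prod_(i | th i == t) y t (j i).
Proof.
move=> j_incr /forallP jT; have j_inj := increasing_inj j_incr.
rewrite (reindex_onto colouring_along (fun c => [ffun i => odflt t0 (c (j i))])) /=;
  last first.
  move=> c /andP[_ /eqP jc]; apply/ffunP => u.
  have [/imsetP[i _ ->]|uj] := boolP (u \in [set j i | i : 'I_L]).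
    rewrite colouring_along_on // ffunE; case cj: (c (j i)) => [t|] //=.
    have ji : j i \in [set j i | i : 'I_L] by apply/imsetP; exists i.
    by move: ji; rewrite jc inE cj.
  by rewrite colouring_along_off //; move: uj; rewrite jc inE negbK => /eqP.
apply: esym; apply: eq_big => th; last first.
  move=> _; rewrite /cweight (bigID (mem [set j i | i : 'I_L])) /=.
  rewrite [X in _ * X]big1 ?mulr1 => [|u uj]; last by rewrite colouring_along_off.
  rewrite big_imset /=; last by move=> ? ? _ _; apply: j_inj.
  rewrite (partition_big th predT) //=; apply: eq_bigr => t _.
  by apply: eq_bigr => i /eqP <-; rewrite colouring_along_on.
have -> : [ffun i => odflt t0 (colouring_along th (j i))] = th.
  by apply/ffunP => i; rewrite ffunE colouring_along_on.
rewrite eqxx csupport_along // eqxx !andbT /colouring_with.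
have -> : [forall u, (u \in T) ==> (colouring_along th u == None)].
  apply/forallP => u; apply/implyP => uT; rewrite colouring_along_off //.
  by apply/negP => /imsetP[i _ e]; have := jT i; rewrite -e uT.
apply: eq_forallb => t.
have -> : [set u | colouring_along th u == Some t] = j @: [set i | th i == t].
  apply/setP => u.
  have [/imsetP[i _ ->]|uj] := boolP (u \in [set j i | i : 'I_L]).
    by rewrite inE colouring_along_on // mem_imset // inE.
  rewrite inE colouring_along_off //; apply/esym/negbTE; apply: contra uj.
  by move=> /imsetP[i _ ->]; apply: imset_f.
by rewrite card_imset.
Qed.

Lemma sum_colourings_on_image_eq0 T l :
  ~~ [forall i, j i \notin T] ->
  \sum_(c | colouring_with T l c && ([set j i | i : 'I_L] == csupport c)) cweight y c = 0.
Proof.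
rewrite negb_forall => /existsP[i]; rewrite negbK => jiT.
apply: big_pred0 => c; apply/negP => /andP[/andP[/forallP cT _] /eqP jc].
have ji : j i \in [set j i | i : 'I_L] by apply/imsetP; exists i.
by move: ji; rewrite jc inE; have := cT (j i); rewrite jiT => /eqP ->.
Qed.

End Along.

Lemma Csum_increasing T l (t0 : 'I_k) (x0 : 'I_N) :
  Csum y T l = \sum_(j : {ffun 'I_(\sum_(t < k) l t) -> 'I_N} | increasing j)
    \sum_(c | colouring_with T l c && ([set j i | i : 'I_(\sum_(t < k) l t)] == csupport c))
      cweight y c.
Proof.
rewrite (exchange_big_dep (colouring_with T l)) /=; last by move=> j c _ /andP[].
apply: eq_bigr => c /[dup] cTl /andP[_ /forallP cl].
have card_c : #|csupport c| = (\sum_(t < k) l t)%N.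
  by rewrite (card_csupport t0); apply: eq_bigr => t _; apply/eqP.
have [j0 j0_incr j0c] := increasing_enum x0 card_c.
rewrite (big_pred1 j0) // => j; rewrite cTl /=; apply/andP/eqP => [[j_incr /eqP jc]|->].
  by apply: increasing_eq => //; rewrite jc.
by rewrite j0c.
Qed.

Lemma Hsum_Csum T l (t0 : 'I_k) (x0 : 'I_N) : Hsum T y l = Csum y T l.
Proof.
rewrite (Csum_increasing _ _ t0 x0).
rewrite (bigID (fun j : {ffun 'I__ -> 'I_N} => [forall i, j i \notin T])) /=.
rewrite [X in _ = _ + X]big1 ?addr0 => [|j /andP[_]]; last exact: sum_colourings_on_image_eq0.
apply: eq_big => [j|j /andP[jT j_incr]]; first by rewrite andbC.
by rewrite (sum_colourings_on_image _ t0).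
Qed.

End HsumCsum.

Section DerivativeExpansion.
Variables (R : comNzRingType) (N k : nat) (y : 'I_k -> 'I_N -> R).
Implicit Types (c f : {ffun 'I_N -> option (option 'I_k)}) (v : option (option 'I_k)).

(* A marking selects the points [u] with [c u != None] and labels each of them
   either as a variable or by a direction. *)
Definition mfactor v (u : 'I_N) : {mpoly R[N]} :=
  match v with None => 1 | Some None => 'X_u | Some (Some t) => (y t u)%:MP_[N] end.

Definition mterm c : {mpoly R[N]} := \prod_u mfactor (c u) u.

Definition admissible (n k' : nat) c : bool :=
  [&& #|[set u | c u != None]| == n,
      [forall u, forall t : 'I_k, (c u == Some (Some t)) ==> (t < k')%N] &
      [forall t : 'I_k, (t < k')%N ==> [exists u, c u == Some (Some t)]]].

Definition unmark (t0 : 'I_k) v := if v == Some (Some t0) then Some None else v.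

Definition unmarkf (t0 : 'I_k) c : {ffun 'I_N -> option (option 'I_k)} :=
  [ffun u => unmark t0 (c u)].

Lemma unmark_eqNone t0 v : (unmark t0 v == None) = (v == None).
Proof. by rewrite /unmark; case: (v =P Some (Some t0)) => [->|]. Qed.

Lemma unmark_eqSS t0 v t :
  (unmark t0 v == Some (Some t)) = (v == Some (Some t)) && (t != t0).
Proof.
rewrite /unmark; have [->|ne] := eqVneq v (Some (Some t0)).
  have [->|nt] := eqVneq t t0; first by rewrite andbF.
  by rewrite /= andbT; apply/esym/eqP => -[e]; move: nt; rewrite e eqxx.
by have [et|] := eqVneq t t0; rewrite ?andbT // et andbF; apply/negbTE.
Qed.

Lemma mfactor_shift (z : 'I_N -> R) v u :
  mfactor v u \mPo [tuple ('X_i + (z i)%:MP_[N]) | i < N] =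
  if v is Some None then 'X_u + (z u)%:MP else mfactor v u.
Proof.
case: v => [[t|]|] /=.
- by rewrite comp_mpolyC.
- by rewrite comp_mpolyXU (nth_mktuple _ 0 u).
- by rewrite comp_mpoly1.
Qed.

(* Expanding [x_u + y_t0 u] splits a variable mark into itself and the mark [t0]. *)
Lemma sum_unmark_mfactor t0 v u : v != Some (Some t0) ->
  \sum_(w | unmark t0 w == v) mfactor w u =
  mfactor v u \mPo [tuple ('X_i + (y t0 i)%:MP_[N]) | i < N].
Proof.
rewrite mfactor_shift; case: v => [[t|]|] v_t0.
- rewrite (big_pred1 (Some (Some t))) // => w; rewrite /= unmark_eqSS.
  by have [e|_] := eqVneq t t0; [rewrite e eqxx in v_t0 | rewrite andbT].
- rewrite (bigD1 (Some None)) //= (bigD1 (Some (Some t0))) /=; last by rewrite /unmark eqxx.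
  rewrite big_pred0 ?addr0 //= => w; rewrite /unmark.
  case: (w =P Some (Some t0)) => [->|ne]; first by rewrite eqxx andbF.
  by case: (w == Some None).
- by rewrite (big_pred1 None) // => w; rewrite /= unmark_eqNone.
Qed.

Lemma dderiv_mterm t0 c : (forall u, c u != Some (Some t0)) ->
  dderiv (y t0) (mterm c) = \sum_(f | (unmarkf t0 f == c) && (f != c)) mterm f.
Proof.
move=> c_t0; rewrite /dderiv /mterm rmorph_prod /=.
rewrite (eq_bigr (fun u => \sum_(w | unmark t0 w == c u) mfactor w u)); last first.
  by move=> u _; rewrite sum_unmark_mfactor.
rewrite bigA_distr_big_dep /= (bigD1 c) /=; last first.
  by apply/familyP => u; rewrite unfold_in /unmark (negbTE (c_t0 u)).
rewrite addrC addrK; apply: eq_bigl => f; congr (_ && _).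
apply/familyP/eqP => [fc|<- u]; last by rewrite unfold_in ffunE.
by apply/ffunP => u; rewrite ffunE; apply/eqP; have := fc u; rewrite unfold_in.
Qed.

Section LastDirection.
Variables (k' : nat) (hk : (k' < k)%N).
Let t0 : 'I_k := Ordinal hk.

Lemma admissible_unmark n c : admissible n k'.+1 c -> admissible n k' (unmarkf t0 c).
Proof.
move=> /and3P[/eqP cn /forallP c_lt /forallP c_onto]; apply/and3P; split.
- by rewrite -cn; apply/eqP/eq_card => u; rewrite !inE ffunE unmark_eqNone.
- apply/forallP => u; apply/forallP => t; rewrite ffunE unmark_eqSS.
  apply/implyP => /andP[cu nt]; have := forallP (c_lt u) t; rewrite cu ltnS.
  by rewrite leq_eqVlt => /orP[/eqP e|//]; case/eqP: nt; apply: val_inj.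
- apply/forallP => t; apply/implyP => lt.
  have /existsP[u cu] := implyP (c_onto t) (ltnW lt).
  apply/existsP; exists u; rewrite ffunE unmark_eqSS cu /=.
  by apply: contraTneq lt => ->; rewrite ltnn.
Qed.

Lemma admissible_succ n c f : admissible n k' c -> unmarkf t0 f = c ->
  admissible n k'.+1 f = (f != c).
Proof.
move=> /and3P[/eqP cn /forallP c_lt /forallP c_onto] fc.
have fcu u : unmark t0 (f u) = c u by rewrite -fc ffunE.
apply/idP/idP => [/and3P[_ _ /forallP f_onto]|fc_ne].
  have /existsP[u /eqP fu] := implyP (f_onto t0) (ltnSn _).
  apply/eqP => e; have := forallP (c_lt u) t0; rewrite -e fu eqxx /=.
  by rewrite ltnn.
apply/and3P; split.
- by rewrite -cn; apply/eqP/eq_card => u; rewrite !inE -fcu unmark_eqNone.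
- apply/forallP => u; apply/forallP => t; apply/implyP => fu.
  have [->|nt] := eqVneq t t0; first exact: ltnSn.
  by have := forallP (c_lt u) t; rewrite -fcu unmark_eqSS fu nt => /ltnW.
- apply/forallP => t; apply/implyP; rewrite ltnS leq_eqVlt => /orP[/eqP e|lt].
    have [u fu] : exists u, f u != c u.
      apply/existsP; move: fc_ne; apply: contraR; rewrite negb_exists => /forallP fc_eq.
      by apply/eqP/ffunP => u; apply/eqP; have := fc_eq u; rewrite negbK.
    apply/existsP; exists u; move: fu; rewrite -fcu /unmark.
    case: (f u =P Some (Some t0)) => [->|]; last by rewrite eqxx.
    by move=> _; apply/eqP; congr (Some (Some _)); apply: val_inj.
  have /existsP[u cu] := implyP (c_onto t) lt.
  by apply/existsP; exists u; move: cu; rewrite -fcu unmark_eqSS => /andP[].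
Qed.

Lemma dderiv_admissible n :
  dderiv (y t0) (\sum_(c | admissible n k' c) mterm c) =
  \sum_(c | admissible n k'.+1 c) mterm c.
Proof.
rewrite /dderiv raddf_sum -sumrB.
rewrite (eq_bigr (fun c => \sum_(f | (unmarkf t0 f == c) && (f != c)) mterm f)); last first.
  move=> c /and3P[_ /forallP c_lt _]; rewrite -dderiv_mterm // => u.
  by apply: contraTneq (forallP (c_lt u) t0) => ->; rewrite eqxx ltnn.
rewrite [RHS](partition_big (unmarkf t0) (admissible n k')) /=; last first.
  by move=> c; apply: admissible_unmark.
apply: eq_bigr => c c_adm; apply: eq_bigl => f.
apply/andP/andP => [[/eqP fc fc_ne]|[f_adm /eqP fc]]; rewrite fc eqxx.
  by rewrite (admissible_succ c_adm fc).
by rewrite -(admissible_succ c_adm fc).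
Qed.

End LastDirection.

Lemma S_sym_admissible n : S_sym R N n = \sum_(c | admissible n 0 c) mterm c.
Proof.
pose mark_set (S : {set 'I_N}) : {ffun 'I_N -> option (option 'I_k)} :=
  [ffun u => if u \in S then Some None else None].
rewrite [RHS](reindex_onto mark_set (fun c => [set u | c u != None])) /=; last first.
  move=> c /and3P[_ /forallP c_lt _]; apply/ffunP => u; rewrite !ffunE inE.
  case cu: (c u) => [[t|]|] //=.
  by have := forallP (c_lt u) t; rewrite cu eqxx.
apply: eq_big => S; last first.
  by move=> _; rewrite /mterm big_mkcond; apply: eq_bigr => u _; rewrite ffunE; case: ifP.
rewrite /admissible.
have -> : [set u | mark_set S u != None] = S.
  by apply/setP => u; rewrite inE ffunE; case: ifP.
rewrite eqxx andbT; case: (#|S| == n) => //=.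
apply/esym/andP; split; apply/forallP => // u; apply/forallP => t.
by rewrite ffunE; case: ifP.
Qed.

Lemma foldl_dderiv_admissible n k' : (k' <= k)%N ->
  foldl (fun g t => dderiv (y t) g) (S_sym R N n) (take k' (enum 'I_k)) =
  \sum_(c | admissible n k' c) mterm c.
Proof.
elim: k' => [|k' IHk] hk; first by rewrite take0 S_sym_admissible.
have hs : (k' < size (enum 'I_k))%N by rewrite size_enum_ord.
rewrite (take_nth (Ordinal hk) hs) foldl_rcons (IHk (ltnW hk)) -dderiv_admissible.
by congr (dderiv (y _) _); apply: val_inj; rewrite /= nth_enum_ord.
Qed.

Lemma iter_dderiv_S_sym n :
  iter_dderiv y (S_sym R N n) = \sum_(c | admissible n k c) mterm c.
Proof.
rewrite -foldl_dderiv_admissible // /iter_dderiv take_oversize //.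
by rewrite size_enum_ord.
Qed.

End DerivativeExpansion.

Lemma mono_of_set_inj N : injective (@mono_of_set N).
Proof.
move=> A B e; apply/setP => i.
have := congr1 (fun m : 'X_{1..N} => m i) e; rewrite /= !mnmE.
by case: (i \in A); case: (i \in B).
Qed.

Section CoefficientExtraction.
Variables (R : comNzRingType) (N k : nat) (y : 'I_k -> 'I_N -> R).
Implicit Types (c : {ffun 'I_N -> option (option 'I_k)}) (T : {set 'I_N}).

Definition marked_vars c : {set 'I_N} := [set u | c u == Some None].

Definition directions c : {ffun 'I_N -> option 'I_k} :=
  [ffun u => if c u is Some (Some t) then Some t else None].

Lemma mterm_split c :
  mterm y c = (cweight y (directions c))%:MP * 'X_[mono_of_set (marked_vars c)].
Proof.
rewrite /mterm (eq_bigr (fun u => (if directions c u is Some t then y t u else 1)%:MP *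
   'X_[if c u == Some None then U_(u)%MM else 0%MM])); last first.
  move=> u _; rewrite ffunE; case: (c u) => [[t|]|] /=.
  - by rewrite mpolyX0 mulr1.
  - by rewrite mpolyC1 mul1r.
  - by rewrite mpolyX0 mpolyC1 mulr1.
rewrite big_split /= -rmorph_prod; congr (_ * _).
rewrite -(big_morph (@mpolyX N R) (@mpolyXD N R) (@mpolyX0 N R)); congr mpolyX.
apply/mnmP => i; rewrite mnm_sumE mnmE inE (bigD1 i) //= big1 ?addn0.
  by case: (c i == Some None); rewrite ?mnm1E ?eqxx ?mnm0E.
by move=> j ji; case: (c j == Some None); rewrite ?mnm1E ?(negbTE ji) ?mnm0E.
Qed.

Lemma mcoeff_sum_admissible n T :
  (\sum_(c | admissible n k c) mterm y c)@_(mono_of_set T) =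
  \sum_(c | admissible n k c && (marked_vars c == T)) cweight y (directions c).
Proof.
rewrite raddf_sum /= [RHS]big_mkcond [LHS]big_mkcond /=; apply: eq_bigr => c _.
case: (admissible n k c) => //=.
rewrite mterm_split mcoeffCM mcoeffX (inj_eq (@mono_of_set_inj N)).
by case: eqP; rewrite ?mulr1 ?mulr0.
Qed.

Definition onto_colouring T (L : nat) (c : {ffun 'I_N -> option 'I_k}) : bool :=
  [&& [forall u, (u \in T) ==> (c u == None)],
      #|csupport c| == L &
      [forall t, [exists u, c u == Some t]]].

Lemma sum_admissible_marked n T : (#|T| <= n)%N ->
  \sum_(c | admissible n k c && (marked_vars c == T)) cweight y (directions c) =
  \sum_(c | onto_colouring T (n - #|T|) c) cweight y c.
Proof.
move=> Tn; pose mark (d : {ffun 'I_N -> option 'I_k}) : {ffun 'I_N -> option (option 'I_k)} :=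
  [ffun u => if u \in T then Some None else omap Some (d u)].
rewrite (reindex_onto mark directions) /=; last first.
  move=> c /andP[_ /eqP cT]; apply/ffunP => u; rewrite !ffunE -cT inE.
  by case: (c u) => [[t|]|].
apply: eq_big => d; last first.
  by move=> /andP[_ /eqP ->].
have -> : marked_vars (mark d) = T.
  by apply/setP => u; rewrite !inE ffunE; case: (u \in T) => //; case: (d u).
rewrite eqxx andbT.
have -> : (directions (mark d) == d) = [forall u, (u \in T) ==> (d u == None)].
  apply/eqP/forallP => [<- u|dT]; first by rewrite !ffunE; case: (u \in T).
  apply/ffunP => u; rewrite !ffunE; have := dT u.
  by case: (u \in T) => /= [/eqP->|]; last case: (d u).
rewrite /onto_colouring; case dT: [forall u, _]; last by rewrite andbF.
rewrite andbT /admissible.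
have -> : [set u | mark d u != None] = T :|: csupport d.
  by apply/setP => u; rewrite !inE ffunE; case: (u \in T) => //; case: (d u).
rewrite cardsU.
have -> : T :&: csupport d = set0.
  apply/setP => u; rewrite !inE; case uT: (u \in T) => //=.
  by have := forallP dT u; rewrite uT => /eqP ->.
rewrite cards0 subn0 [X in _ && (X && _)](_ : _ = true) /=; last first.
  by apply/forallP => u; apply/forallP => t; rewrite ltn_ord implybT.
congr andb; first by apply/eqP/eqP => [<-|->]; [rewrite addKn | rewrite subnKC].
apply: eq_forallb => t; rewrite ltn_ord /=.
apply/existsP/existsP => -[u].
  rewrite ffunE; case: (u \in T) => //=; case du: (d u) => [t'|] //= /eqP [<-].
  by exists u; rewrite du.
move=> du; exists u; rewrite ffunE.
case uT: (u \in T); last by rewrite (eqP du).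
by have := forallP dT u; rewrite uT (eqP du).
Qed.

Lemma sum_onto_colourings T L (t0 : 'I_k) :
  \sum_(c | onto_colouring T L c) cweight y c =
  \sum_(l : {ffun 'I_k -> 'I_L.+1} |
          [forall t, (1 <= l t)%N] && ((\sum_(t < k) (l t : nat))%N == L)%N)
    Csum y T (fun t => l t).
Proof.
pose sizes (c : {ffun 'I_N -> option 'I_k}) : {ffun 'I_k -> 'I_L.+1} :=
  [ffun t => inord #|[set u | c u == Some t]|].
have fibre_le (c : {ffun 'I_N -> option 'I_k}) t : onto_colouring T L c -> (#|[set u | c u == Some t]| <= L)%N.
  move=> /and3P[_ /eqP <- _]; apply/subset_leq_card/subsetP => u.
  by rewrite !inE => /eqP ->.
have sizesE (c : {ffun 'I_N -> option 'I_k}) t : onto_colouring T L c -> sizes c t = #|[set u | c u == Some t]| :> nat.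
  by move=> c_onto; rewrite ffunE inordK // ltnS fibre_le.
rewrite (partition_big sizes (fun l : {ffun 'I_k -> 'I_L.+1} =>
   [forall t, (1 <= l t)%N] && ((\sum_(t < k) (l t : nat))%N == L)%N)) /=; last first.
  move=> c /[dup] c_onto /and3P[_ /eqP cL /forallP c_all]; apply/andP; split.
    apply/forallP => t; rewrite sizesE // card_gt0.
    by have /existsP[u cu] := c_all t; apply/set0Pn; exists u; rewrite inE.
  apply/eqP; rewrite -[RHS]cL (card_csupport t0).
  by apply: eq_bigr => t _; apply: sizesE.
apply: eq_bigr => l /andP[/forallP l_pos /eqP lL]; apply: eq_bigl => d.
apply/andP/idP => [[/[dup] d_onto /and3P[dT _ _] /eqP <-]|/andP[dT /forallP dl]].
  by apply/andP; split => //; apply/forallP => t; rewrite sizesE.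
have d_onto : onto_colouring T L d.
  apply/and3P; split => //.
    by rewrite (card_csupport t0) -[X in _ == X]lL; apply/eqP/eq_bigr => t _; apply/eqP.
  apply/forallP => t; have := l_pos t; rewrite -(eqP (dl t)) card_gt0.
  by move=> /set0Pn[u]; rewrite inE => du; apply/existsP; exists u.
split => //; apply/eqP/ffunP => t; apply: val_inj.
by rewrite /= sizesE // (eqP (dl t)).
Qed.

End CoefficientExtraction.

Lemma prime_ndvd_fact p n : prime p -> (n < p)%N -> ~~ (p %| n`!)%N.
Proof.
move=> p_pr; elim: n => [|n IHn] n_lt.
  by rewrite fact0 dvdn1; apply: contraTneq (prime_gt1 p_pr) => ->.
by rewrite factS Euclid_dvdM // negb_or IHn ?(ltnW n_lt) // gtnNdvd.
Qed.

Lemma natr_fact_neq0 (F : idomainType) p n : p \in [pchar F] -> (n < p)%N -> n`!%:R != 0 :> F.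
Proof.
move=> charFp n_lt; rewrite -(dvdn_pcharf charFp).
exact/prime_ndvd_fact/n_lt/(pcharf_prime charFp).
Qed.

Lemma leq_part_sum k (l : 'I_k -> nat) t : (forall t, 0 < l t)%N ->
  (l t + k.-1 <= \sum_(t' < k) l t')%N.
Proof.
move=> l_pos; rewrite (bigD1 t) //= leq_add2l.
have -> : k.-1 = #|predC1 t| by rewrite cardC1 card_ord.
by rewrite -sum1_card; apply: leq_sum => t' _; apply: l_pos.
Qed.

Unset Implicit Arguments. Set Strict Implicit. Set Printing Implicit Defensive.

Theorem corollary2p3 (p : nat) (hp : prime p) (N n k : nat)
  (hk : (1 <= k)%N) (hkn : (k <= n)%N) (hnN : (n <= N)%N)
  (y : 'I_k -> 'I_N -> 'F_p) (m : nat) (hm : (m <= n - k)%N)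
  (j : 'I_m -> 'I_N)
  (hj : forall i i' : 'I_m, (i < i')%N -> (j i < j i')%N) :
  let T : {set 'I_N} := [set j i | i : 'I_m] in
  let a : 'F_p := (iter_dderiv y (S_sym 'F_p N n))@_(mono_of_set T) in
  (a = \sum_(l : {ffun 'I_k -> 'I_(n - m).+1} |
               [forall t, (1 <= l t)%N] && ((\sum_(t < k) (l t : nat))%N == n - m)%N)
         Hsum T y (fun t => (l t : nat)))
  /\
  ((n + 1 < k + m + p)%N ->
   a = \sum_(l : {ffun 'I_k -> 'I_(n - m).+1} |
               [forall t, (1 <= l t)%N] && ((\sum_(t < k) (l t : nat))%N == n - m)%N)
         (\prod_(t < k) ((l t)`!)%:R)^-1 * Ssum T y (fun t => (l t : nat))).
Proof.
move=> T a.
have t0 : 'I_k := Ordinal hk.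
have x0 : 'I_N := Ordinal (leq_trans hk (leq_trans hkn hnN)).
have card_T : #|T| = m by rewrite card_imset ?card_ord //; apply: ltn_homo_inj.
have a_Csum : a = \sum_(l : {ffun 'I_k -> 'I_(n - m).+1} |
    [forall t, (1 <= l t)%N] && ((\sum_(t < k) (l t : nat))%N == n - m)%N)
  Csum y T (fun t => l t).
  rewrite /a iter_dderiv_S_sym mcoeff_sum_admissible sum_admissible_marked card_T.
    exact: sum_onto_colourings.
  by rewrite (leq_trans hm) ?leq_subr.
split; first by rewrite a_Csum; apply: eq_bigr => l _; rewrite (Hsum_Csum _ _ _ t0 x0).
move=> p_large; rewrite a_Csum; apply: eq_bigr => l /andP[/forallP l_pos /eqP l_sum].
rewrite Ssum_Csum natr_prod mulKf //; apply/prodf_neq0 => t _.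
apply: (natr_fact_neq0 (pchar_Fp hp)).
have := leq_part_sum t l_pos; rewrite l_sum; lia.
Qed.
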